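(* Let $\lambda\in\mathbb{C}$ be an algebraic number with $|\lambda|=1$ that is not a root of unity, and define $u_n=\frac n2\lambda^n+\frac n2\overline{\lambda}^n+(1-n)$. Then for every $p\in\mathbb{N}$ there exists $n\in\mathbb{N}$ such that $u_n,u_{n+1},\dots,u_{n+p-1}$ are all $\le 0$. Consequently (together with the fact that $u_n>0$ infinitely often) the sign description of $\langle u_n\rangle$ is not almost periodic.
   Context: $\overline{\lambda}$ is the complex conjugate. The sign description of a real sequence is $\sigma_n=\mathrm{sgn}(u_n)\in\{-,0,+\}$. An infinite word $\alpha$ is almost periodic if for every finite word $w$ there is $p$ such that either $w$ does not occur in $\alpha$ after position $p$, or $w$ occurs in every factor $\alpha_n\cdots\alpha_{n+p}$. *)

From HB Require Import structures.
From mathcomp Require Import all_boot all_order all_algebra all_field.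
Set Implicit Arguments. Unset Strict Implicit. Unset Printing Implicit Defensive.
Import Order.TTheory GRing.Theory Num.Theory.
Local Open Scope ring_scope.

Inductive sign := SNeg | SZero | SPos.

Definition sgnC (x : algC) : sign :=
  if x < 0 then SNeg else if x == 0 then SZero else SPos.

Definition sign_description (u : nat -> algC) : nat -> sign :=
  fun n => sgnC (u n).

Definition occurs_at {A : Type} (a : nat -> A) (w : seq A) (m : nat) : Prop :=
  forall i (Hi : (i < size w)%N), exists x0 : A, a (m + i)%N = nth x0 w i.

Definition almost_periodic {A : Type} (a : nat -> A) : Prop :=
  forall w : seq A, exists p : nat,
    (forall m, (p <= m)%N -> ~ occurs_at a w m) \/
    (forall n, exists m, (n <= m)%N /\ (m + size w <= n + p + 1)%N /\ occurs_at a w m).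

Definition useq (lam : algC) (n : nat) : algC :=
  (n%:R / 2) * lam ^+ n + (n%:R / 2) * (lam^* ) ^+ n + (1 - n%:R).

From HB Require Import structures.
From mathcomp Require Import all_boot all_order all_algebra all_field.
From mathcomp Require Import ring lra zify.
Import Order.TTheory GRing.Theory Num.Theory.
Local Open Scope ring_scope.

(* Let |λ| = 1 with λ not a root of unity, and write c_n = |1 - λ^n| for the
   chord from 1 to λ^n.  Since |1 - λ^n|² = 2 - λ^n - conj(λ)^n, the sequence is
   u_n = 1 - (n/2) c_n², so u_n <= 0 iff n c_n² >= 2 (useq_chord).
   Moduli, real and imaginary parts are read in the real closed field algR,
   where linear and nonlinear real arithmetic can be decided.
   - Long nonpositive runs: let 2δ be a positive lower bound of c_j for
     0 < j <= 2p and N with N δ² >= 2.  If some c_{N+i} (i < p) is below δ,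
     the triangle inequality c_{b-a} <= c_a + c_b forces c_m >= δ on the p
     indices following N + p; otherwise c_m >= δ on N, ..., N + p - 1.
   - Infinitely many positive terms: a Dirichlet-type pigeonhole principle.
     Rotating by a power of i moves every point into the quarter-plane
     |Re z| <= Im z, where the chord is controlled by the real parts; slicing
     the real axis into K buckets, among 4K + 5 powers of λ two fall in the
     same quarter and bucket, giving 0 < n <= 4K + 4 with (K c_n)² < 8,
     hence n c_n² < 2 for K >= 17, and n is large when K is.
   - A word with arbitrarily late letters + and arbitrarily long runs avoiding
     + is not almost periodic (not_almost_periodic). *)

Definition nrm (z : algC) : algR := in_algR (normr_real z).
Definition re (z : algC) : algR := in_algR (Creal_Re z).
Definition im (z : algC) : algR := in_algR (Creal_Im z).

Lemma algR_leE (x y : algR) : (x <= y) = (algRval x <= algRval y).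
Proof. by []. Qed.
Lemma algR_ltE (x y : algR) : (x < y) = (algRval x < algRval y).
Proof. by []. Qed.

Lemma nrm_ge0 z : 0 <= nrm z.
Proof. by rewrite algR_leE rmorph0 /=. Qed.

Lemma nrm_eq0 z : (nrm z == 0) = (z == 0).
Proof. by rewrite -(inj_eq val_inj) rmorph0 /= normr_eq0. Qed.

Lemma nrmN z : nrm (- z) = nrm z.
Proof. by apply: val_inj; rewrite /= normrN. Qed.

Lemma nrmM z w : nrm (z * w) = nrm z * nrm w.
Proof. by apply: val_inj; rewrite rmorphM /= normrM. Qed.

Lemma nrmX z n : nrm (z ^+ n) = nrm z ^+ n.
Proof. by apply: val_inj; rewrite rmorphXn /= normrX. Qed.

Lemma nrmD z w : nrm (z + w) <= nrm z + nrm w.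
Proof. by rewrite algR_leE rmorphD /=; exact: ler_normD. Qed.

Lemma nrm_iX k : nrm ('i ^+ k) = 1.
Proof.
by rewrite nrmX (_ : nrm 'i = 1) ?expr1n //; apply: val_inj; rewrite rmorph1 /= normCi.
Qed.

Lemma nrm_sqr z : nrm z ^+ 2 = re z ^+ 2 + im z ^+ 2.
Proof. by apply: val_inj; rewrite rmorphD !rmorphXn /= normC2_Re_Im. Qed.

Lemma reB z w : re (z - w) = re z - re w.
Proof. by apply: val_inj; rewrite rmorphB /= raddfB. Qed.
Lemma imB z w : im (z - w) = im z - im w.
Proof. by apply: val_inj; rewrite rmorphB /= raddfB. Qed.
Lemma reN z : re (- z) = - re z.
Proof. by apply: val_inj; rewrite rmorphN /= raddfN. Qed.
Lemma imN z : im (- z) = - im z.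
Proof. by apply: val_inj; rewrite rmorphN /= raddfN. Qed.
Lemma re_mulI z : re ('i * z) = - im z.
Proof. by apply: val_inj; rewrite rmorphN /= ReMil. Qed.
Lemma im_mulI z : im ('i * z) = re z.
Proof. by apply: val_inj; rewrite /= ImMil. Qed.

Lemma re_unit w : nrm w = 1 -> -1 <= re w <= 1.
Proof.
move=> w_unit; have := nrm_sqr w; rewrite w_unit expr1n => e.
have := sqr_ge0 (im w) => im2_ge0; apply/andP; split; nra.
Qed.

Lemma finite_lower_bound (R : realDomainType) (f : nat -> R) (k : nat) :
  (forall j, (0 < j <= k)%N -> 0 < f j) ->
  exists2 d : R, 0 < d & forall j, (0 < j <= k)%N -> d <= f j.
Proof.
elim: k => [|k IHk] f_gt0; first by exists 1 => [|[|j]].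
have [|d d_gt0 d_le] := IHk.
  by move=> j /andP[j_gt0 j_le]; rewrite f_gt0 // j_gt0 (leq_trans j_le).
exists (Order.min d (f k.+1)); first by rewrite lt_min d_gt0 f_gt0 /=.
move=> j /andP[j_gt0]; rewrite leq_eqVlt ltnS => /orP[/eqP->|j_le].
  by rewrite ge_min lexx orbT.
by rewrite ge_min d_le ?j_gt0.
Qed.

Lemma truncn_eq_sqr_dist (R : archiRealFieldType) (x y : R) : 0 <= x -> 0 <= y ->
  Num.truncn x = Num.truncn y -> (x - y) ^+ 2 < 1.
Proof.
move=> /truncn_itv/andP[x_ge x_lt] /truncn_itv/andP[y_ge y_lt] eq_xy.
rewrite eq_xy -natr1 in x_ge x_lt; rewrite -natr1 in y_lt; nra.
Qed.

Definition upper (z : algC) : bool := `|re z| <= im z.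

Lemma upper_rotation z : exists k : 'I_4, upper ('i ^+ k * z).
Proof.
have : [\/ upper z, upper ('i * z), upper (- z) | upper (- ('i * z))].
  rewrite /upper !(reN, imN, re_mulI, im_mulI) !opprK !normrN !ler_norml !opprK.
  by case: (lerP (re z) (im z)) => h1; case: (lerP (- re z) (im z)) => h2;
    [constructor 1|constructor 4|constructor 2|constructor 3];
    apply/andP; split; lra.
have rot2 : 'i ^+ 2 * z = - z by rewrite sqrCi mulN1r.
have rot3 : 'i ^+ 3 * z = - ('i * z) by rewrite exprS sqrCi mulrN1 mulNr.
case=> h; [exists (@Ordinal 4 0 isT) | exists (@Ordinal 4 1 isT)
          | exists (@Ordinal 4 2 isT) | exists (@Ordinal 4 3 isT)];
  by rewrite /= ?rot2 ?rot3 ?expr0 ?mul1r ?expr1.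
Qed.

Definition quarter (z : algC) : 'I_4 :=
  odflt ord0 [pick k : 'I_4 | upper ('i ^+ k * z)].

Lemma upper_quarter z : upper ('i ^+ quarter z * z).
Proof.
rewrite /quarter; case: pickP => [k //|none].
by have [k] := upper_rotation z; rewrite none.
Qed.

Lemma upper_im_gap w1 w2 : nrm w1 = 1 -> nrm w2 = 1 -> upper w1 -> upper w2 ->
  (im w1 - im w2) ^+ 2 <= (re w1 - re w2) ^+ 2.
Proof.
move=> w1_unit w2_unit; rewrite /upper !ler_norml => /andP[a1 b1] /andP[a2 b2].
have := nrm_sqr w1; have := nrm_sqr w2; rewrite w1_unit w2_unit expr1n.
move: a1 b1 a2 b2; move: (re w1) (im w1) (re w2) (im w2).
move=> x1 y1 x2 y2 a1 b1 a2 b2 e2 e1.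
(* Both points are on the circle, and |x1 + x2| <= y1 + y2 in the quarter. *)
have sq_diff : (y1 - y2) * (y1 + y2) = (x2 - x1) * (x2 + x1) by nra.
have [s_le0|s_gt0] := lerP (y1 + y2) 0.
  have [-> ->] : y1 = 0 /\ y2 = 0 by split; lra.
  by rewrite subrr expr0n sqr_ge0.
have sum_x : (x2 + x1) ^+ 2 <= (y1 + y2) ^+ 2.
  have := @mulr_ge0 _ (y1 + y2 - (x2 + x1)) (y1 + y2 + (x2 + x1)); nra.
rewrite -(@ler_pM2r _ ((y1 + y2) ^+ 2)) ?exprn_gt0 //.
rewrite -exprMn sq_diff exprMn -[(x1 - x2) ^+ 2]sqrrN opprB.
by rewrite ler_wpM2l ?sqr_ge0.
Qed.

(* Slicing [-1, 1] into K equal buckets (the last one closed). *)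
Definition bucket (K : nat) (w : algC) : nat :=
  Num.truncn ((re w + 1) * K%:R / 2).

Lemma bucket_le K w : nrm w = 1 -> (bucket K w <= K)%N.
Proof.
move=> /re_unit/andP[lo hi]; rewrite /bucket truncn_le_nat -addn1 natrD.
have K_ge0 : (0 : algR) <= K%:R by [].
rewrite ltr_pdivrMr //; nra.
Qed.

Lemma bucket_eq_re K w1 w2 : nrm w1 = 1 -> nrm w2 = 1 ->
  bucket K w1 = bucket K w2 -> ((re w1 - re w2) * K%:R) ^+ 2 < 4.
Proof.
move=> /re_unit/andP[lo1 hi1] /re_unit/andP[lo2 hi2] /truncn_eq_sqr_dist.
have K_ge0 : (0 : algR) <= K%:R by [].
have s_ge0 (x : algR) : -1 <= x -> 0 <= (x + 1) * K%:R / 2.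
  by move=> x_ge; rewrite divr_ge0 // mulr_ge0 //; lra.
move=> /(_ (s_ge0 _ lo1) (s_ge0 _ lo2)).
have -> : (re w1 + 1) * K%:R / 2 - (re w2 + 1) * K%:R / 2
          = (re w1 - re w2) * K%:R / 2 by field.
rewrite expr_div_n; lra.
Qed.

Lemma close_points K w1 w2 : nrm w1 = 1 -> nrm w2 = 1 ->
  upper w1 -> upper w2 -> bucket K w1 = bucket K w2 ->
  (K%:R * nrm (w1 - w2)) ^+ 2 < 8.
Proof.
move=> w1_unit w2_unit up1 up2 same.
have gap := upper_im_gap w1 w2 w1_unit w2_unit up1 up2.
have := bucket_eq_re K w1 w2 w1_unit w2_unit same.
rewrite [(_ * K%:R) ^+ 2]exprMn => re_close.
rewrite exprMn nrm_sqr reB imB mulrDr.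
have := ler_wpM2l (sqr_ge0 (K%:R : algR)) gap; lra.
Qed.

Lemma sgnC_pos (x : algC) : 0 < x -> sgnC x = SPos.
Proof. by move=> x_gt0; rewrite /sgnC (lt_gtF x_gt0) (gt_eqF x_gt0). Qed.

Lemma sgnC_nonpos (x : algC) : x <= 0 -> sgnC x <> SPos.
Proof. by rewrite /sgnC le_eqVlt => /orP[/eqP->|->]; rewrite ?ltxx ?eqxx. Qed.

(* A sign word in which + occurs arbitrarily late, while arbitrarily long
   factors avoid +, is not almost periodic: the word [+] is neither absent
   after some position nor present in every window of a fixed length. *)
Lemma not_almost_periodic (u : nat -> algC) :
  (forall M, exists n, (M <= n)%N /\ 0 < u n) ->
  (forall p, exists n, forall i, (i < p)%N -> u (n + i) <= 0) ->
  ~ almost_periodic (sign_description u).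
Proof.
move=> late_pos runs /(_ [:: SPos]) [p [never_late|dense]].
  have [n [p_le_n u_pos]] := late_pos p.
  apply: (never_late n p_le_n) => i; rewrite ltnS leqn0 => /eqP->.
  by exists SPos; rewrite addn0 /sign_description sgnC_pos.
have [n run] := runs p.+1.
have [m [n_le_m [m_le occ]]] := dense n.
have [x0] := occ 0%N isT; rewrite addn0 /=; apply: sgnC_nonpos.
have -> : m = (n + (m - n))%N by lia.
apply: run; move: m_le => /=; lia.
Qed.

Lemma dirichlet_bound (k n c : algR) : 17 <= k -> 0 <= n -> n <= 4 * k + 4 ->
  (k * c) ^+ 2 < 8 -> n * c ^+ 2 < 2.
Proof.
move=> k_ge17 n_ge0 n_le close.
have k2_gt0 : 0 < k ^+ 2 by rewrite exprn_gt0 //; lra.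
rewrite -(ltr_pM2r k2_gt0).
have : n * (c ^+ 2 * k ^+ 2) <= n * 8 by rewrite ler_wpM2l // -exprMn mulrC ltW.
have : n * 8 <= (4 * k + 4) * 8 by rewrite ler_wpM2r.
have : (4 * k + 4) * 8 < 2 * k ^+ 2 by rewrite expr2; nra.
rewrite mulrA; lra.
Qed.

Lemma useq_chord (lam : algC) (n : nat) : `|lam| = 1 ->
  useq lam n = algRval (1 - n%:R / 2 * nrm (1 - lam ^+ n) ^+ 2).
Proof.
move=> lam_unit.
rewrite rmorphB rmorph1 !rmorphM fmorphV !rmorph_nat /= -expr2.
rewrite normCK rmorphB rmorph1 /= rmorphXn /useq.
have conj_inv : lam ^+ n * (lam^* ) ^+ n = 1.
  by rewrite -exprMn -normCK lam_unit !expr1n.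
have -> : (1 - lam ^+ n) * (1 - (lam^* ) ^+ n) = 2 - lam ^+ n - (lam^* ) ^+ n.
  by rewrite mulrBl !mulrBr conj_inv; ring.
by field.
Qed.

Section UnitCircle.

Variable lam : algC.
Hypothesis lam_unit : `|lam| = 1.

Definition chord (n : nat) : algR := nrm (1 - lam ^+ n).

Lemma nrm_lamX n : nrm (lam ^+ n) = 1.
Proof. by rewrite nrmX (_ : nrm lam = 1) ?expr1n //; apply: val_inj; rewrite /= lam_unit. Qed.

Lemma nrm_sub_lamX a b : (a <= b)%N -> nrm (lam ^+ a - lam ^+ b) = chord (b - a).
Proof.
move=> le_ab; have -> : lam ^+ a - lam ^+ b = lam ^+ a * (1 - lam ^+ (b - a)).
  by rewrite mulrBr mulr1 -exprD subnKC.
by rewrite nrmM nrm_lamX mul1r.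
Qed.

Lemma chord_sub a b : (a <= b)%N -> chord (b - a) <= chord a + chord b.
Proof.
move=> le_ab; rewrite -nrm_sub_lamX //.
have -> : lam ^+ a - lam ^+ b = - (1 - lam ^+ a) + (1 - lam ^+ b) by ring.
by apply: le_trans (nrmD _ _) _; rewrite nrmN.
Qed.

Lemma useq_le0 n : 2 <= n%:R * chord n ^+ 2 -> useq lam n <= 0.
Proof.
move=> big; rewrite useq_chord // -(rmorph0 algRval) -algR_leE.
rewrite -/(chord n); lra.
Qed.

Lemma useq_gt0 n : n%:R * chord n ^+ 2 < 2 -> 0 < useq lam n.
Proof.
move=> small; rewrite useq_chord // -(rmorph0 algRval) -algR_ltE.
rewrite -/(chord n); lra.
Qed.

Lemma eventually_nonpos (delta : algR) : 0 < delta ->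
  exists N, forall n, (N <= n)%N -> delta <= chord n -> useq lam n <= 0.
Proof.
move=> delta_gt0; have delta2_gt0 : 0 < delta ^+ 2 by exact: exprn_gt0.
exists (Num.bound (2 / delta ^+ 2)) => n N_le_n delta_le; apply: useq_le0.
have : 2 / delta ^+ 2 < n%:R.
  apply: lt_le_trans (archi_boundP _) _; last by rewrite ler_nat.
  by rewrite divr_ge0 // ltW.
rewrite ltr_pdivrMr // => lt2; apply: le_trans (ltW lt2) _.
by rewrite ler_wpM2l // lerXn2r // nnegrE (le_trans (ltW delta_gt0)).
Qed.

Lemma dirichlet K : exists n, [/\ (0 < n)%N, (n <= 4 * K + 4)%N & (K%:R * chord n) ^+ 2 < 8].
Proof.
pose pt i := 'i ^+ quarter (lam ^+ i) * lam ^+ i.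
have pt_unit i : nrm (pt i) = 1 by rewrite nrmM nrm_iX nrm_lamX mul1r.
pose f (i : 'I_(4 * K + 4).+1) := (quarter (lam ^+ i), (inord (bucket K (pt i)) : 'I_K.+1)).
have /injectivePn [i [j neq_ij eq_f]] : ~~ injectiveb f.
  by apply/injectiveP => /leq_card; rewrite card_prod !card_ord; lia.
wlog lt_ij : i j neq_ij eq_f / (i < j)%N.
  move=> gen; case: (ltngtP i j) => [|lt_ji|/val_inj eq_ij]; first exact: gen.
    by apply: (gen j i); rewrite 1?eq_sym.
  by rewrite eq_ij eqxx in neq_ij.
have eq_q : quarter (lam ^+ i) = quarter (lam ^+ j) := congr1 fst eq_f.
have := congr1 (fun q => nat_of_ord q.2) eq_f; rewrite !inordK ?ltnS ?bucket_le // => eq_b.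
exists (j - i)%N; split.
- by rewrite subn_gt0.
- by rewrite (leq_trans (leq_subr _ _)) // -ltnS.
have -> : chord (j - i) = nrm (pt i - pt j).
  by rewrite /pt eq_q -mulrBr nrmM nrm_iX mul1r nrm_sub_lamX // ltnW.
by apply: close_points (pt_unit i) (pt_unit j) _ _ eq_b; exact: upper_quarter.
Qed.

Hypothesis lam_not_root : forall k : nat, (0 < k)%N -> lam ^+ k != 1.

Lemma chord_gt0 n : (0 < n)%N -> 0 < chord n.
Proof.
move=> n_gt0; rewrite lt_def nrm_ge0 andbT nrm_eq0 subr_eq0 eq_sym.
exact: lam_not_root.
Qed.

Lemma chord_lower_bound k :
  exists2 d, 0 < d & forall j, (0 < j <= k)%N -> d <= chord j.
Proof.
by apply: finite_lower_bound => j /andP[j_gt0 _]; exact: chord_gt0.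
Qed.

Lemma long_nonpositive_runs p :
  exists n, forall i, (i < p)%N -> useq lam (n + i) <= 0.
Proof.
have [d d_gt0 d_le] := chord_lower_bound (p + p).
have [|N late] := @eventually_nonpos (d / 2); first by rewrite divr_gt0.
case: (boolP [exists i : 'I_p, chord (N + i) < d / 2]).
  case/existsP=> i0 small; exists (N + p)%N => i lt_ip.
  apply: late; first by rewrite -addnA leq_addr.
  have lt_i0p := ltn_ord i0.
  have le_ab : (N + i0 <= N + p + i)%N by lia.
  have gap_range : (0 < N + p + i - (N + i0) <= p + p)%N by lia.
  have := @chord_sub _ _ le_ab; have := d_le _ gap_range; move: small; lra.
rewrite negb_exists => /forallP none; exists N => i lt_ip.
by apply: late; [exact: leq_addr | have := none (Ordinal lt_ip); rewrite -leNgt].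
Qed.

(* Second claim: the sequence is positive infinitely often.  With K large,
   the Dirichlet index n has a chord shorter than every c_j, 0 < j <= M. *)
Lemma positive_terms_unbounded M : exists n, (M <= n)%N /\ 0 < useq lam n.
Proof.
have [e e_gt0 e_le] := chord_lower_bound M.
have e2_gt0 : 0 < e ^+ 2 by exact: exprn_gt0.
pose K := (Num.bound (8 / e ^+ 2) + 17)%N.
have K_ge17 : (17 : algR) <= K%:R by rewrite ler_nat leq_addl.
have Ke2 : 8 < K%:R * e ^+ 2.
  rewrite -ltr_pdivrMr //; apply: lt_le_trans (archi_boundP _) _.
    by rewrite divr_ge0 // ltW.
  by rewrite ler_nat leq_addr.
have [n [n_gt0 n_le close]] := dirichlet K.
exists n; split; last first.
  apply/useq_gt0/(@dirichlet_bound K%:R) => //.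
  by move: n_le; rewrite -(ler_nat algR) natrD natrM.
rewrite leqNgt; apply/negP => lt_nM.
have e_le_c : e <= chord n by apply: e_le; rewrite n_gt0 ltnW.
set k : algR := K%:R in close Ke2 K_ge17 *; set c := chord n in close e_le_c *.
have : e ^+ 2 <= c ^+ 2 by rewrite lerXn2r // nnegrE ltW // (lt_le_trans e_gt0).
move=> /(ler_wpM2l (sqr_ge0 k)).
have : k * e ^+ 2 <= k ^+ 2 * e ^+ 2 by rewrite ler_wpM2r ?ltW // expr2; nra.
rewrite exprMn in close; lra.
Qed.

End UnitCircle.

Theorem mainTheorem11 (lam : algC)
  (Hnorm : `|lam| = 1)
  (Hnotroot : forall k : nat, (0 < k)%N -> lam ^+ k != 1) :
  (forall p : nat, exists n : nat,
      forall i : nat, (i < p)%N -> useq lam (n + i) <= 0)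
  /\ ~ almost_periodic (sign_description (useq lam)).
Proof.
have runs := long_nonpositive_runs lam Hnorm Hnotroot.
split=> //; apply: not_almost_periodic => //.
exact: positive_terms_unbounded lam Hnorm Hnotroot.
Qed.
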